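(* Consider the fifth-order WENO reconstruction of the numerical flux $\hat f_{i\pm\frac12}=\sum_{m=0}^{2}\omega_{m,i\pm\frac12}\hat f^m_{i\pm\frac12}$ on a uniform grid $x_i=x_0+i\Delta x$, for a smooth function $f$. Use the WENO-JS weights with $\epsilon=0$, $$\omega_{m}=\frac{\alpha_m}{\sum_{l=0}^2\alpha_l},\qquad \alpha_m=\frac{d_m}{(\beta^{DS}_{m})^2},\qquad (d_0,d_1,d_2)=\Bigl(\tfrac1{10},\tfrac6{10},\tfrac3{10}\Bigr),$$ where $\beta^{DS}_{m,i\pm\frac12}=\beta_{m,i\pm\frac12}(\delta_{m,i}+C)$. Assume that the Jiang–Shu smoothness indicators satisfy $\beta_{m,i\pm\frac12}=D(1+O(\Delta x^2))$ with $D$ a nonzero constant independent of $m$, that the multipliers satisfy $\delta_{1,i}=\Phi(\bar x_i)$, $\delta_{0,i}=\Phi(\bar x_i)+O(\Delta x)$, $\delta_{2,i}=\Phi(\bar x_i)+O(\Delta x)$ for some function $\Phi$ of the stencil $\bar x_i=(x_{i-k},\dots,x_{i+k})$, and that $C$ is chosen so that $P(\bar x_i):=\Phi(\bar x_i)+C>\kappa>0$ for a fixed $\kappa$ (with $P=O(1)$). Then $$\omega^{DS}_{m,i\pm\frac12}=d_m+O(\Delta x),\qquad m=0,1,2.$$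
   Context: Fifth-order WENO: on the stencil $\{x_{i-2},\dots,x_{i+2}\}$, with $f_j=f(u(x_j))$, the candidate fluxes are $\hat f^0_{i+\frac12}=\frac{2f_{i-2}-7f_{i-1}+11f_i}{6}$, $\hat f^1_{i+\frac12}=\frac{-f_{i-1}+5f_i+2f_{i+1}}{6}$, $\hat f^2_{i+\frac12}=\frac{2f_i+5f_{i+1}-f_{i+2}}{6}$ (the $i-\frac12$ versions by shifting all indices by $-1$). The Jiang–Shu smoothness indicators for $\hat f_{i+\frac12}$ are $\beta_0=\frac{13}{12}(f_{i-2}-2f_{i-1}+f_i)^2+\frac14(f_{i-2}-4f_{i-1}+3f_i)^2$, $\beta_1=\frac{13}{12}(f_{i-1}-2f_i+f_{i+1})^2+\frac14(-f_{i-1}+f_{i+1})^2$, $\beta_2=\frac{13}{12}(f_i-2f_{i+1}+f_{i+2})^2+\frac14(3f_i-4f_{i+1}+f_{i+2})^2$; those for $\hat f_{i-\frac12}$ by index shift $-1$. The same multiplier $\delta_{m,i}$ (depending only on the global stencil position $i$) is used for both $\beta_{m,i+\frac12}$ and $\beta_{m,i-\frac12}$; in the paper the $\delta_{m,i}$ are outputs of a convolutional neural network with differentiable activations and receptive field of size $2k+1$, with $\delta_{0,i+1}=\delta_{1,i}=\delta_{2,i-1}$. *)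

From mathcomp Require Import all_boot all_order all_algebra.
Set Implicit Arguments. Unset Strict Implicit. Unset Printing Implicit Defensive.
Import Order.TTheory GRing.Theory Num.Theory.
Local Open Scope ring_scope.

Section WENO.
Variable R : realFieldType.

(* Uniform big-O as Delta x -> 0+:  e(h,i) = O(h^p) uniformly in the grid index i. *)
Definition bigO_unif (e : R -> int -> R) (p : nat) : Prop :=
  exists K h0 : R, 0 < h0 /\
    forall h, 0 < h -> h < h0 -> forall i : int, `|e h i| <= K * h ^+ p.

Definition fgrid (f : R -> R) (x0 dx : R) (j : int) : R := f (x0 + j%:~R * dx).

(* Jiang--Shu smoothness indicators beta_{m, i+1/2} on stencil x_{i-2..i+2};
   those for i-1/2 are obtained as betaJS fv (i - 1) m. *)
Definition betaJS (fv : int -> R) (i : int) (m : 'I_3) : R :=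
  match val m with
  | 0%N => 13%:R / 12%:R * (fv (i - 2) - 2%:R * fv (i - 1) + fv i) ^+ 2
           + 1 / 4%:R * (fv (i - 2) - 4%:R * fv (i - 1) + 3%:R * fv i) ^+ 2
  | 1%N => 13%:R / 12%:R * (fv (i - 1) - 2%:R * fv i + fv (i + 1)) ^+ 2
           + 1 / 4%:R * (- fv (i - 1) + fv (i + 1)) ^+ 2
  | _ => 13%:R / 12%:R * (fv i - 2%:R * fv (i + 1) + fv (i + 2)) ^+ 2
           + 1 / 4%:R * (3%:R * fv i - 4%:R * fv (i + 1) + fv (i + 2)) ^+ 2
  end.

Definition dlin (m : 'I_3) : R :=
  match val m with
  | 0%N => 1 / 10%:R
  | 1%N => 6%:R / 10%:R
  | _ => 3%:R / 10%:R
  end.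

Definition alphaJS (b : 'I_3 -> R) (m : 'I_3) : R := dlin m / b m ^+ 2.
Definition omegaJS (b : 'I_3 -> R) (m : 'I_3) : R :=
  alphaJS b m / \sum_(l < 3) alphaJS b l.

Definition stencil (k : nat) (x0 dx : R) (i : int) : 'rV[R]_(k.*2.+1) :=
  \row_(j < k.*2.+1) (x0 + (i + (j : nat)%:Z - k%:Z)%:~R * dx).

(* deep-smoothness weights at x_{i+1/2} and x_{i-1/2}, with
   beta^DS_{m,i+-1/2} = beta_{m,i+-1/2} * (delta_{m,i} + C);
   delta : dx -> m -> i -> R *)
Definition omegaDS_plus (f : R -> R) (x0 : R) (delta : R -> 'I_3 -> int -> R)
    (C dx : R) (i : int) (m : 'I_3) : R :=
  omegaJS (fun l => betaJS (fgrid f x0 dx) i l * (delta dx l i + C)) m.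

Definition omegaDS_minus (f : R -> R) (x0 : R) (delta : R -> 'I_3 -> int -> R)
    (C dx : R) (i : int) (m : 'I_3) : R :=
  omegaJS (fun l => betaJS (fgrid f x0 dx) (i - 1) l * (delta dx l i + C)) m.

End WENO.

(* With epsilon = 0 the WENO-JS weights d_m b_m^-2 / sum_l d_l b_l^-2 are invariant
   under a common rescaling of the indicators b_m.  Writing
   beta^DS_m = (D P) (1 + e_m) (1 + (delta_m - Phi) / P), with e_m = O(dx^2) and, since
   P > kappa, (delta_m - Phi) / P = O(dx), the factor D P cancels and the weights become
   d_m v_m / sum_l d_l v_l with v_l = 1 + O(dx).  As the d_l are nonnegative with sum 1,
   such normalized weights are d_m + O(dx), uniformly in the grid index. *)

From mathcomp Require Import all_boot all_order all_algebra.
From mathcomp Require Import ring lra.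
Set Implicit Arguments. Unset Strict Implicit. Unset Printing Implicit Defensive.
Import Order.TTheory GRing.Theory Num.Theory.
Local Open Scope ring_scope.

Section BigOUnif.
Variable R : realFieldType.
Implicit Types (e : R -> int -> R) (p q : nat).

Lemma bigO_unif_eq0 e p : (forall h i, 0 < h -> e h i = 0) -> bigO_unif e p.
Proof.
move=> e0; exists 0, 1; split=> // h h_gt0 _ i.
by rewrite e0 // normr0 mul0r.
Qed.

Lemma bigO_unif_le (c : R) e1 e2 p : 0 <= c ->
  (forall h i, 0 < h -> `|e2 h i| <= c * `|e1 h i|) ->
  bigO_unif e1 p -> bigO_unif e2 p.
Proof.
move=> c_ge0 le21 [K [h0 [h0_gt0 bd1]]]; exists (c * K), h0; split=> // h h_gt0 hh0 i.
by rewrite -mulrA; apply: le_trans (le21 _ _ h_gt0) _; rewrite ler_wpM2l ?bd1.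
Qed.

Lemma bigO_unif_comp_index e p (g : int -> int) :
  bigO_unif e p -> bigO_unif (fun h i => e h (g i)) p.
Proof.
by move=> [K [h0 [h0_gt0 bd]]]; exists K, h0; split=> // h h_gt0 hh0 i; apply: bd.
Qed.

Lemma bigO_unif_weaken e p q : (p <= q)%N -> bigO_unif e q -> bigO_unif e p.
Proof.
move=> le_pq [K [h0 [h0_gt0 bd]]]; exists `|K|, (Order.min h0 1).
split=> [|h h_gt0]; first by rewrite lt_min h0_gt0 ltr01.
rewrite lt_min => /andP[hh0 h_lt1] i; apply: le_trans (bd h h_gt0 hh0 i) _.
apply: le_trans (ler_wpM2r _ (ler_norm K)) _; first by rewrite exprn_ge0 ?ltW.
by rewrite ler_wpM2l ?normr_ge0 // ler_wiXn2l ?ltW.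
Qed.

Lemma bigO_unif_add e1 e2 p :
  bigO_unif e1 p -> bigO_unif e2 p -> bigO_unif (fun h i => e1 h i + e2 h i) p.
Proof.
move=> [K1 [a1 [a1_gt0 bd1]]] [K2 [a2 [a2_gt0 bd2]]].
exists (K1 + K2), (Order.min a1 a2); split=> [|h h_gt0]; first by rewrite lt_min a1_gt0.
rewrite lt_min => /andP[ha1 ha2] i; rewrite mulrDl.
by apply: le_trans (ler_normD _ _) _; rewrite lerD ?bd1 ?bd2.
Qed.

Lemma bigO_unif_mul e1 e2 p q :
  bigO_unif e1 p -> bigO_unif e2 q -> bigO_unif (fun h i => e1 h i * e2 h i) (p + q).
Proof.
move=> [K1 [a1 [a1_gt0 bd1]]] [K2 [a2 [a2_gt0 bd2]]].
exists (K1 * K2), (Order.min a1 a2); split=> [|h h_gt0]; first by rewrite lt_min a1_gt0.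
rewrite lt_min => /andP[ha1 ha2] i; rewrite normrM exprD mulrACA.
by rewrite ler_pM ?normr_ge0 ?bd1 ?bd2.
Qed.

Lemma bigO_unif_divr e (P : R -> int -> R) (kappa : R) p : 0 < kappa ->
  (forall h i, 0 < h -> kappa < P h i) ->
  bigO_unif e p -> bigO_unif (fun h i => e h i / P h i) p.
Proof.
move=> kappa_gt0 P_gt; apply: (bigO_unif_le (c := kappa^-1)) => [|h i h_gt0].
  by rewrite invr_ge0 ltW.
have P_gt0 : 0 < P h i by apply: lt_trans (P_gt h i h_gt0).
rewrite normrM normfV (gtr0_norm P_gt0) mulrC ler_wpM2r ?normr_ge0 //.
by rewrite lef_pV2 ?posrE // ltW ?P_gt.
Qed.

Lemma bigO_unif_sum (I : Type) (s : seq I) (e : I -> R -> int -> R) p :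
  (forall l, bigO_unif (e l) p) ->
  bigO_unif (fun h i => \sum_(l <- s) `|e l h i|) p.
Proof.
move=> e_small; elim: s => [|a s IHs].
  by apply: bigO_unif_eq0 => h i _; rewrite big_nil.
have e_abs : bigO_unif (fun h i => `|e a h i|) p.
  by apply: (bigO_unif_le (c := 1)) (e_small a) => // h i _; rewrite mul1r normr_id.
apply: (bigO_unif_le (c := 1)) (bigO_unif_add e_abs IHs) => // h i _.
by rewrite big_cons mul1r.
Qed.

End BigOUnif.

Section WENOWeights.
Variable R : realFieldType.

Lemma forall_ord3 (P : 'I_3 -> Prop) : P 0 -> P 1 -> P 2%:R -> forall l, P l.
Proof.
move=> P0 P1 P2 [[|[|[|n]]] l_lt] //.
- by have -> : Ordinal l_lt = 0 by apply: val_inj.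
- by have -> : Ordinal l_lt = 1 by apply: val_inj.
- by have -> : Ordinal l_lt = 2%:R by apply: val_inj.
Qed.

Lemma dlin_ge0 m : 0 <= dlin R m.
Proof. by move: m; apply: forall_ord3; rewrite /dlin /=; lra. Qed.

Lemma sum_dlin : \sum_(l < 3) dlin R l = 1.
Proof. by rewrite !big_ord_recr big_ord0 /= /dlin /=; lra. Qed.

Lemma eq_omegaJS (b1 b2 : 'I_3 -> R) m : b1 =1 b2 -> omegaJS b1 m = omegaJS b2 m.
Proof.
move=> eq_b; rewrite /omegaJS /alphaJS; congr (_ / _); last apply: eq_bigr => l _.
all: by rewrite eq_b.
Qed.

Lemma omegaJS_scale (s : R) (b : 'I_3 -> R) m :
  s != 0 -> omegaJS (fun l => s * b l) m = omegaJS b m.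
Proof.
move=> s_neq0; rewrite /omegaJS /alphaJS.
have alphaM l : dlin R l / (s * b l) ^+ 2 = (s ^+ 2)^-1 * (dlin R l / b l ^+ 2).
  by rewrite exprMn invfM; ring.
rewrite alphaM (eq_bigr _ (fun l _ => alphaM l)) -mulr_sumr.
by rewrite -mulf_div divff ?mul1r // invr_eq0 expf_neq0.
Qed.

Lemma invsqr_near1 (x t : R) :
  t <= 1 / 20%:R -> `|x - 1| <= t -> `|(x ^+ 2)^-1 - 1| <= 6%:R * t.
Proof.
move=> t_small; rewrite ler_norml => /andP[x_lb x_ub].
have sqr_lb : 1 / 2%:R <= x ^+ 2 by nra.
have sqr_near : `|1 - x ^+ 2| <= 3%:R * t by rewrite ler_norml; apply/andP; split; nra.
have sqr_gt0 : 0 < x ^+ 2 by lra.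
have -> : (x ^+ 2)^-1 - 1 = (1 - x ^+ 2) / x ^+ 2 by field; rewrite -sqrf_eq0 gt_eqF.
have t_ge0 : 0 <= t by lra.
rewrite normrM normfV (gtr0_norm sqr_gt0) ler_pdivrMr //; nra.
Qed.

Lemma normalized_weight_near (T : finType) (d v : T -> R) (r : R) m :
  (forall l, 0 <= d l) -> \sum_l d l = 1 -> r <= 1 / 2%:R ->
  (forall l, `|v l - 1| <= r) ->
  `|d m * v m / \sum_l d l * v l - d m| <= 4%:R * r.
Proof.
move=> d_ge0 d_sum r_small v_near; set S := \sum_l d l * v l.
have S_near : `|S - 1| <= r.
  have -> : S - 1 = \sum_l d l * (v l - 1).
    by rewrite -{1}d_sum -sumrB; apply: eq_bigr => l _; rewrite mulrBr mulr1.
  apply: le_trans (ler_norm_sum _ _ _) _.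
  rewrite [X in _ <= X](_ : r = \sum_l d l * r); last by rewrite -mulr_suml d_sum mul1r.
  apply: ler_sum => l _.
  by rewrite normrM ger0_norm // ler_wpM2l.
have dm_le1 : d m <= 1 by rewrite -d_sum (bigD1 m) //= lerDl sumr_ge0.
have /andP[vm_lb vm_ub] : - r <= v m - 1 <= r by rewrite -ler_norml.
move: S_near; rewrite ler_norml => /andP[S_lb S_ub].
have S_gt0 : 0 < S by lra.
have -> : d m * v m / S - d m = d m * (v m - S) / S by field; rewrite gt_eqF.
rewrite normrM normfV (gtr0_norm S_gt0) ler_pdivrMr // normrM (ger0_norm (d_ge0 m)).
have : `|v m - S| <= 2%:R * r by rewrite ler_norml; apply/andP; split; lra.
have := d_ge0 m; have := normr_ge0 (v m - S); nra.
Qed.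

Lemma omegaJS_near_dlin (u : 'I_3 -> R) (t : R) m :
  t <= 1 / 20%:R -> (forall l, `|u l - 1| <= t) ->
  `|omegaJS u m - dlin R m| <= 24%:R * t.
Proof.
move=> t_small u_near; have -> : 24%:R * t = 4%:R * (6%:R * t) by ring.
(* [omegaJS u m] unfolds to the normalized weight with [v l = (u l ^+ 2)^-1]. *)
apply: (normalized_weight_near (v := fun l => (u l ^+ 2)^-1)) => //.
- exact: dlin_ge0.
- exact: sum_dlin.
- lra.
- by move=> l; apply: invsqr_near1.
Qed.

Lemma omegaJS_dlin_bigO (u : R -> int -> 'I_3 -> R) m :
  (forall l, bigO_unif (fun h i => u h i l - 1) 1) ->
  bigO_unif (fun h i => omegaJS (u h i) m - dlin R m) 1.
Proof.
move=> u_near; have [K [h0 [h0_gt0 bdK]]] := bigO_unif_sum (index_enum 'I_3) u_near.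
exists (24%:R * K), (Order.min h0 (1 / (20%:R * (`|K| + 1)))).
have K1_gt0 : 0 < `|K| + 1 by rewrite ltr_wpDl.
split=> [|h h_gt0]; first by rewrite lt_min h0_gt0 divr_gt0 ?mulr_gt0.
rewrite lt_min ltr_pdivlMr ?mulr_gt0 // => /andP[hh0 h_small] i.
have bd := bdK h h_gt0 hh0 i; rewrite expr1 in bd *.
rewrite -mulrA; apply: omegaJS_near_dlin => [|l].
  by have := ler_norm K; nra.
apply: le_trans bd; apply: le_trans (ler_norm _).
by rewrite (bigD1 l) //= lerDl sumr_ge0.
Qed.

Lemma omegaJS_perturb_bigO (b : R -> int -> 'I_3 -> R) (s : R -> int -> R)
    (e : 'I_3 -> R -> int -> R) m :
  (forall h i, 0 < h -> s h i != 0) ->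
  (forall h i l, 0 < h -> b h i l = s h i * (1 + e l h i)) ->
  (forall l, bigO_unif (e l) 1) ->
  bigO_unif (fun h i => omegaJS (b h i) m - dlin R m) 1.
Proof.
move=> s_neq0 b_def e_small.
have near : bigO_unif (fun h i => omegaJS (fun l => 1 + e l h i) m - dlin R m) 1.
  apply: omegaJS_dlin_bigO => l; apply: (bigO_unif_le (c := 1)) (e_small l) => // h i _.
  by rewrite addrAC subrr add0r mul1r.
apply: (bigO_unif_le (c := 1)) near => // h i h_gt0.
by rewrite mul1r (eq_omegaJS _ (b_def h i ^~ h_gt0)) omegaJS_scale ?s_neq0.
Qed.

End WENOWeights.

Theorem mainTheorem2 (R : realFieldType) (f : R -> R) (x0 : R) (k : nat)
  (delta : R -> 'I_3 -> int -> R) (Phi : 'rV[R]_(k.*2.+1) -> R) (C kappa : R)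
  (D : R -> int -> R)
  (* beta_{m,i+-1/2} = D (1 + O(dx^2)), D nonzero and common to m = 0,1,2 *)
  (hD : forall (dx : R) (i : int), 0 < dx -> D dx i != 0)
  (hbeta : forall m : 'I_3, exists e : R -> int -> R, bigO_unif e 2 /\
      forall (dx : R) (i : int), 0 < dx -> betaJS (fgrid f x0 dx) i m = D dx i * (1 + e dx i))
  (* delta_{1,i} = Phi(xbar_i), delta_{0,i}, delta_{2,i} = Phi(xbar_i) + O(dx) *)
  (hdelta1 : forall (dx : R) (i : int), 0 < dx -> delta dx 1 i = Phi (stencil k x0 dx i))
  (hdelta0 : bigO_unif (fun dx i => delta dx 0 i - Phi (stencil k x0 dx i)) 1)
  (hdelta2 : bigO_unif (fun dx i => delta dx 2%:R i - Phi (stencil k x0 dx i)) 1)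
  (* P = Phi + C > kappa > 0 and P = O(1) *)
  (hkappa : 0 < kappa)
  (hP : forall (dx : R) (i : int), 0 < dx -> kappa < Phi (stencil k x0 dx i) + C)
  (hPbd : bigO_unif (fun dx i => Phi (stencil k x0 dx i) + C) 0) :
  forall m : 'I_3,
    bigO_unif (fun dx i => omegaDS_plus f x0 delta C dx i m - dlin R m) 1 /\
    bigO_unif (fun dx i => omegaDS_minus f x0 delta C dx i m - dlin R m) 1.
Proof.
(* Only the lower bound P > kappa matters. *)
pose P dx i := Phi (stencil k x0 dx i) + C.
pose rel l dx i := (delta dx l i - Phi (stencil k x0 dx i)) / P dx i.
have P_gt0 dx i : 0 < dx -> 0 < P dx i.
  by move=> dx_gt0; apply: lt_trans hkappa (hP dx i dx_gt0).
have [e /all_and2[e_small beta_def]] := fin_all_exists hbeta.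
have rel_small l : bigO_unif (rel l) 1.
  have delta_near : bigO_unif (fun dx i => delta dx l i - Phi (stencil k x0 dx i)) 1.
    move: l; apply: forall_ord3 => //.
    by apply: bigO_unif_eq0 => dx i dx_gt0; rewrite hdelta1 ?subrr.
  exact: bigO_unif_divr hkappa hP delta_near.
(* [g] is the index of the indicators: [i] for x_{i+1/2}, [i - 1] for x_{i-1/2}. *)
have DS_small (g : int -> int) m : bigO_unif (fun dx i =>
    omegaJS (fun l => betaJS (fgrid f x0 dx) (g i) l * (delta dx l i + C)) m - dlin R m) 1.
  apply: (omegaJS_perturb_bigO (s := fun dx i => D dx (g i) * P dx i)
    (e := fun l dx i => e l dx (g i) + rel l dx i + e l dx (g i) * rel l dx i)).
  - by move=> dx i dx_gt0; rewrite mulf_neq0 ?hD ?gt_eqF ?P_gt0.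
  - move=> dx i l dx_gt0; rewrite beta_def // /rel /P.
    by field; rewrite gt_eqF ?P_gt0.
  - move=> l; have e_small' := bigO_unif_comp_index g (e_small l).
    apply: bigO_unif_add; first exact: bigO_unif_add (bigO_unif_weaken _ e_small') _.
    exact: bigO_unif_weaken _ (bigO_unif_mul e_small' (rel_small l)).
by move=> m; split; [exact: (DS_small id) | exact: (DS_small (fun i => i - 1))].
Qed.
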